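(* Let $\mathcal{E}_2$ be the genus-$2$ Goeritz group of the $3$-sphere acting on $H_1(\Sigma_2)=H_1(\Sigma_2;\mathbb{Z})$. Then the coinvariant module vanishes: \[ H_1(\Sigma_2)_{\mathcal{E}_2} = 0 . \]
   Context: Let $S^3=H_2\cup H_2^*$ be a genus-$2$ Heegaard splitting with Heegaard surface $\Sigma_2=\partial H_2$. The genus-$2$ Goeritz group $\mathcal{E}_2$ is the group of isotopy classes $[f]$ of orientation-preserving homeomorphisms of $\Sigma_2$ for which there is an orientation-preserving self-homeomorphism $F$ of $S^3$ with $F(H_2)=H_2$ and $[F|_{\Sigma_2}]=[f]$; it acts on $H_1(\Sigma_2;\mathbb{Z})$ by induced maps. Fix a basis $x_1,x_2,y_1,y_2$ of $H_1(\Sigma_2;\mathbb{Z})$ (with $x_i$ meridian-type and $y_i$ longitude-type classes, $x_i\cdot y_i=1$). $\mathcal{E}_2$ is generated by four elements $\alpha,\beta,\gamma,\delta$ acting as follows: $\alpha_*(x_i)=-x_i$, $\alpha_*(y_i)=-y_i$ ($i=1,2$); $\beta_*(x_1)=x_1$, $\beta_*(x_2)=-x_2$, $\beta_*(y_1)=y_1$, $\beta_*(y_2)=-y_2$; $\gamma_*(x_1)=-x_2$, $\gamma_*(x_2)=-x_1$, $\gamma_*(y_1)=-y_2$, $\gamma_*(y_2)=-y_1$; $\delta_*(x_1)=-x_1+x_2$, $\delta_*(x_2)=-x_1$, $\delta_*(y_1)=y_2$, $\delta_*(y_2)=-y_1-y_2$. For a group $G$ and a left $G$-module $N$, the coinvariant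 module $N_G$ is the quotient of $N$ by the subgroup generated by $\{gn-n : g\in G,\ n\in N\}$. *)

From HB Require Import structures.
From mathcomp Require Import all_boot all_order all_algebra.
Set Implicit Arguments. Unset Strict Implicit. Unset Printing Implicit Defensive.
Import Order.TTheory GRing.Theory Num.Theory.
Local Open Scope ring_scope.

(* H_1(Sigma_2; Z) is identified with Z^4 = 'cV[int]_4 via the ordered basis
   (x1, x2, y1, y2) = (e_0, e_1, e_2, e_3).  A homeomorphism acts by the
   matrix whose j-th column is the image of the j-th basis vector. *)
Definition H1 := 'cV[int]_4.

Definition mx_of_cols (c0 c1 c2 c3 : 'cV[int]_4) : 'M[int]_4 :=
  \matrix_(i < 4, j < 4)
    (match val j with 0 => c0 | 1 => c1 | 2 => c2 | _ => c3 end) i ord0.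

Definition vec4 (a b c d : int) : 'cV[int]_4 :=
  \col_(i < 4) (match val i with 0 => a | 1 => b | 2 => c | _ => d end).

Definition goe_alpha : 'M[int]_4 :=
  mx_of_cols (vec4 (-1) 0 0 0) (vec4 0 (-1) 0 0) (vec4 0 0 (-1) 0) (vec4 0 0 0 (-1)).
Definition goe_beta : 'M[int]_4 :=
  mx_of_cols (vec4 1 0 0 0) (vec4 0 (-1) 0 0) (vec4 0 0 1 0) (vec4 0 0 0 (-1)).
Definition goe_gamma : 'M[int]_4 :=
  mx_of_cols (vec4 0 (-1) 0 0) (vec4 (-1) 0 0 0) (vec4 0 0 0 (-1)) (vec4 0 0 (-1) 0).
Definition goe_delta : 'M[int]_4 :=
  mx_of_cols (vec4 (-1) 1 0 0) (vec4 (-1) 0 0 0) (vec4 0 0 0 1) (vec4 0 0 (-1) (-1)).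

(* The image of the Goeritz group E_2 in GL(H_1(Sigma_2)) = GL_4(Z):
   the subgroup generated by the images of alpha, beta, gamma, delta. *)
Inductive goeritz_image : 'M[int]_4 -> Prop :=
  | gi_one : goeritz_image 1%:M
  | gi_alpha : goeritz_image goe_alpha
  | gi_beta : goeritz_image goe_beta
  | gi_gamma : goeritz_image goe_gamma
  | gi_delta : goeritz_image goe_delta
  | gi_mul g h : goeritz_image g -> goeritz_image h -> goeritz_image (g *m h)
  | gi_inv g : goeritz_image g -> goeritz_image (invmx g).

Inductive coinv_rel : H1 -> Prop :=
  | cr_gen g (n : H1) : goeritz_image g -> coinv_rel (g *m n - n)
  | cr_zero : coinv_rel 0
  | cr_add u v : coinv_rel u -> coinv_rel v -> coinv_rel (u + v)
  | cr_opp u : coinv_rel u -> coinv_rel (- u).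

(* The coinvariant module H_1/coinv_rel is zero iff coinv_rel is everything. *)
Definition coinvariants_trivial : Prop := forall v : H1, coinv_rel v.

From mathcomp Require Import all_boot all_order all_algebra.
Import GRing.Theory.
Local Open Scope ring_scope.

(* Since alpha acts as -1, the relations alpha v - v = -2v put 2 H_1 into the
   relation subgroup.  Modulo 2 H_1, delta - 1 sends x1 to x2, x2 to x1 + x2,
   y1 to y1 + y2 and y2 to y1, so the relations contain every basis vector. *)

Section AdditiveSubgroup.

Variables (n : nat) (P : 'cV[int]_n -> Prop).
Hypotheses (P0 : P 0) (PD : forall u v, P u -> P v -> P (u + v))
  (PN : forall u, P u -> P (- u)).

Lemma addsubgroup_scale (z : int) u : P u -> P (z *: u).
Proof.
move=> Pu; have Pnat m : P (m%:Z *: u).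
  by elim: m => [|m IHm]; rewrite ?scale0r // intS scalerDl scale1r; apply: PD.
by case: z => m; rewrite ?NegzE ?scaleNr; [|apply: PN].
Qed.

Lemma addsubgroup_full_of_basis :
  (forall i, P (delta_mx i 0)) -> forall v, P v.
Proof.
move=> Pbasis v; rewrite [v]matrix_sum_delta.
apply: (big_ind P) => // i _; apply: (big_ind P) => // j _.
by rewrite ord1; apply: addsubgroup_scale.
Qed.

End AdditiveSubgroup.

Definition x1 : H1 := vec4 1 0 0 0.
Definition x2 : H1 := vec4 0 1 0 0.
Definition y1 : H1 := vec4 0 0 1 0.
Definition y2 : H1 := vec4 0 0 0 1.

Ltac vec4_eq := unfold goe_alpha, goe_delta, x1, x2, y1, y2;
  apply/matrixP => -[[|[|[|[|?]]]] ?] -[[|[|[|[|?]]]] ?] //;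
  rewrite !mxE ?big_ord_recr ?big_ord0 /= ?mxE.

Lemma goe_alphaE (v : H1) : goe_alpha *m v = - v.
Proof. by rewrite (_ : goe_alpha = - 1%:M) ?mulNmx ?mul1mx //; vec4_eq. Qed.

Lemma coinv_rel_double v : coinv_rel (v *+ 2).
Proof.
have := cr_opp (cr_gen v gi_alpha).
by rewrite goe_alphaE -opprD opprK.
Qed.

Lemma coinv_rel_delta v : coinv_rel (goe_delta *m v - v).
Proof. exact: cr_gen gi_delta. Qed.

Lemma coinv_rel_x2 : coinv_rel x2.
Proof.
suff -> : x2 = (goe_delta *m x1 - x1) + x1 *+ 2.
  exact: cr_add (coinv_rel_delta x1) (coinv_rel_double x1).
by vec4_eq.
Qed.

Lemma coinv_rel_x1 : coinv_rel x1.
Proof.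
suff -> : x1 = - ((goe_delta *m x2 - x2) + x2).
  exact: cr_opp (cr_add (coinv_rel_delta x2) coinv_rel_x2).
by vec4_eq.
Qed.

Lemma coinv_rel_y1 : coinv_rel y1.
Proof.
suff -> : y1 = - ((goe_delta *m y2 - y2) + y2 *+ 2).
  exact: cr_opp (cr_add (coinv_rel_delta y2) (coinv_rel_double y2)).
by vec4_eq.
Qed.

Lemma coinv_rel_y2 : coinv_rel y2.
Proof.
suff -> : y2 = (goe_delta *m y1 - y1) + y1.
  exact: cr_add (coinv_rel_delta y1) coinv_rel_y1.
by vec4_eq.
Qed.

Lemma coinv_rel_basis (i : 'I_4) : coinv_rel (delta_mx i 0).
Proof.
case: i => -[|[|[|[|//]]]] lt_i4.
- by rewrite (_ : delta_mx _ _ = x1); [exact: coinv_rel_x1 | vec4_eq].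
- by rewrite (_ : delta_mx _ _ = x2); [exact: coinv_rel_x2 | vec4_eq].
- by rewrite (_ : delta_mx _ _ = y1); [exact: coinv_rel_y1 | vec4_eq].
- by rewrite (_ : delta_mx _ _ = y2); [exact: coinv_rel_y2 | vec4_eq].
Qed.

Theorem lemma2p1 : coinvariants_trivial.
Proof.
apply: addsubgroup_full_of_basis coinv_rel_basis.
- exact: cr_zero.
- exact: cr_add.
- exact: cr_opp.
Qed.
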